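(* Let $X$ be a perfectly normal $T_1$ space. The following are equivalent: (1) $X$ is finite; (2) every maximal ideal of $B_1(X)$ is fixed; (3) every proper ideal of $B_1(X)$ is fixed.
   Context: For a topological space $X$, $B_1(X)$ denotes the ring (pointwise operations) of all Baire one functions $f:X\to\mathbb{R}$, i.e. pointwise limits of sequences of continuous real-valued functions. For $f$, $Z(f)=\{x: f(x)=0\}$. A proper ideal $I$ is fixed if $\bigcap_{f\in I}Z(f)\neq\emptyset$, and free otherwise. *)

From Stdlib Require Import Reals Ranalysis List.
Open Scope R_scope.

Definition is_topology {X : Type} (T : (X -> Prop) -> Prop) : Prop :=
  T (fun _ => True) /\ T (fun _ => False) /\
  (forall (F : (X -> Prop) -> Prop),
      (forall U, F U -> T U) -> T (fun x => exists U, F U /\ U x)) /\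
  (forall U V, T U -> T V -> T (fun x => U x /\ V x)).

Definition is_closed {X : Type} (T : (X -> Prop) -> Prop) (A : X -> Prop) : Prop :=
  T (fun x => ~ A x).

Definition T1_space {X : Type} (T : (X -> Prop) -> Prop) : Prop :=
  forall x y : X, x <> y -> exists U, T U /\ U x /\ ~ U y.

Definition normal_space {X : Type} (T : (X -> Prop) -> Prop) : Prop :=
  forall A B : X -> Prop, is_closed T A -> is_closed T B ->
    (forall x, A x -> B x -> False) ->
    exists U V, T U /\ T V /\ (forall x, A x -> U x) /\ (forall x, B x -> V x) /\
      (forall x, U x -> V x -> False).

Definition G_delta {X : Type} (T : (X -> Prop) -> Prop) (A : X -> Prop) : Prop :=
  exists U : nat -> X -> Prop, (forall n, T (U n)) /\
    (forall x, A x <-> forall n, U n x).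

Definition perfectly_normal {X : Type} (T : (X -> Prop) -> Prop) : Prop :=
  normal_space T /\ (forall A, is_closed T A -> G_delta T A).

Definition continuous_on {X : Type} (T : (X -> Prop) -> Prop) (f : X -> R) : Prop :=
  forall D : R -> Prop, open_set D -> T (fun x => D (f x)).

Definition baire_one {X : Type} (T : (X -> Prop) -> Prop) (f : X -> R) : Prop :=
  exists fn : nat -> X -> R, (forall n, continuous_on T (fn n)) /\
    forall x, Un_cv (fun n => fn n x) (f x).

Definition is_ideal {X : Type} (T : (X -> Prop) -> Prop) (I : (X -> R) -> Prop) : Prop :=
  (forall f, I f -> baire_one T f) /\
  I (fun _ => 0) /\
  (forall f g, I f -> I g -> I (fun x => f x + g x)) /\
  (forall f g, I f -> baire_one T g -> I (fun x => g x * f x)).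

Definition is_proper_ideal {X : Type} (T : (X -> Prop) -> Prop) (I : (X -> R) -> Prop) : Prop :=
  is_ideal T I /\ exists f, baire_one T f /\ ~ I f.

Definition is_maximal_ideal {X : Type} (T : (X -> Prop) -> Prop) (I : (X -> R) -> Prop) : Prop :=
  is_proper_ideal T I /\
  forall J, is_proper_ideal T J -> (forall f, I f -> J f) -> (forall f, J f -> I f).

Definition fixed_ideal {X : Type} (I : (X -> R) -> Prop) : Prop :=
  exists x : X, forall f, I f -> f x = 0.

Definition finite_type (X : Type) : Prop := exists l : list X, forall x, In x l.

From Pilot Require Import Defs.
From Stdlib Require Import Reals Ranalysis List Lra.
From HB Require Import structures.
From mathcomp Require Import all_boot all_order all_algebra.
From mathcomp Require Import boolp classical_sets reals topology normedtype.
From mathcomp Require Import Rstruct Rstruct_topology.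
From mathcomp Require urysohn.
From Stdlib Require Import Classical.
Import Num.Theory.

(* (1) => (3): a finite T1 space is discrete, so every real function on X is
   Baire one.  If a proper ideal I were free, each point x would carry some
   f_x in I with f_x(x) <> 0; then g = sum_x f_x^2 lies in I and vanishes
   nowhere, so every h = (h/g) g lies in I, contradicting properness.
   (3) => (2) is immediate.
   (2) => (1): if X is infinite, the finitely supported Baire one functions
   form a proper ideal, which by Zorn's lemma lies in a maximal ideal M, fixed
   at some p by (2).  Perfect normality writes {p} as a decreasing
   intersection of open sets V_n; Urysohn functions equal to 1 at p and to 0
   off V_n converge pointwise to the indicator of {p}, which is therefore a
   finitely supported Baire one function in M not vanishing at p. *)

Local Open Scope classical_set_scope.

Section OpenSets.
Variables (X : Type) (T : (X -> Prop) -> Prop).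
Hypothesis hT : is_topology T.

Lemma open_ext (A B : X -> Prop) : T A -> (forall x, A x <-> B x) -> T B.
Proof.
by move=> TA AB; have -> : B = A by apply/funext => x; apply/propext; split => /AB.
Qed.

Lemma open_union (I : Type) (U : I -> X -> Prop) :
  (forall i, T (U i)) -> T (fun x => exists i, U i x).
Proof.
move=> TU; have [_ [_ [hunion _]]] := hT.
have := hunion (fun V => exists i, V = U i).
move=> /(_ _)/open_ext; apply; first by move=> V [i ->].
move=> x; split => [[V [[i ->] Ux]]|[i Ux]]; first by exists i.
by exists (U i); split => //; exists i.
Qed.

Lemma open_inter (U V : X -> Prop) : T U -> T V -> T (fun x => U x /\ V x).
Proof. by have [_ [_ [_ hinter]]] := hT; exact: hinter. Qed.

End OpenSets.
Arguments open_ext {X T A B}.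
Arguments open_union {X T} hT {I U}.
Arguments open_inter {X T} hT {U V}.

(* Defs describes a topology by its family of open sets; to use the Urysohn lemma of MathComp-Analysis we equip a copy of the carrier
   with the corresponding topologicalType structure. *)
Definition carrier (X : Type) (T : (X -> Prop) -> Prop) (hT : is_topology T) : Type := X.
HB.instance Definition _ X T hT := gen_eqMixin (@carrier X T hT).
HB.instance Definition _ X T hT := gen_choiceMixin (@carrier X T hT).

Section Carrier.
Variables (X : Type) (T : (X -> Prop) -> Prop) (hT : is_topology T).

Lemma carrier_openT : (T : set_system (@carrier X T hT)) setT.
Proof. by case: hT. Qed.

Lemma carrier_openI : setI_closed (T : set_system (@carrier X T hT)).
Proof. by move=> A B; exact: open_inter. Qed.

Lemma carrier_bigcup (I : Type) (f : I -> set (@carrier X T hT)) :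
  (forall i, T (f i)) -> T (\bigcup_i f i).
Proof.
move=> Tf; apply: (open_ext (open_union hT Tf)) => x.
by split => [[i fx]|[i _ fx]]; exists i.
Qed.

HB.instance Definition _ := @isOpenTopological.Build (@carrier X T hT) T
  carrier_openT carrier_openI carrier_bigcup.

Lemma carrier_openE (A : set (@carrier X T hT)) : open A <-> T A.
Proof.
split => [|TA]; last by rewrite openE => p Ap; exists A; split.
rewrite openE => oA; apply: (open_ext (@carrier_bigcup
  {B : set (@carrier X T hT) & T B /\ B `<=` A} (fun B => projT1 B) _)).
  by case=> B [].
move=> p; split => [[[B [TB BA]] _ Bp]|Ap]; first exact: (BA p Bp).
by have [B [TB Bp BA]] := oA p Ap; exists (existT _ B (conj TB BA)).
Qed.

Lemma carrier_closedE (A : set (@carrier X T hT)) : closed A <-> is_closed T A.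
Proof. by rewrite -openC carrier_openE. Qed.

End Carrier.

Lemma open_setE (D : Rdefinitions.R -> Prop) : open_set D <-> open (D : set Rdefinitions.R).
Proof.
split => [oD|].
  rewrite openE => x Dx; have [[d dpos] hd] := oD x Dx.
  apply/nbhs_ballP; exists d; first by apply/RltP.
  move=> y /RltP bxy; apply: hd; rewrite /disc /=.
  by rewrite -Rabs_Ropp Ropp_minus_distr.
rewrite openE => oD x Dx; have /nbhs_ballP [e /RltP epos he] := oD x Dx.
exists (mkposreal e epos) => y hy; apply: he.
by rewrite /ball /= distrC; apply/RltP.
Qed.

Lemma continuous_onE {X T} (hT : is_topology T) {f : X -> Rdefinitions.R} :
  continuous_on T f <-> continuous (f : @carrier X T hT -> Rdefinitions.R).
Proof.
split => [cf|cf D /open_setE oD].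
  by apply/continuousP => A /open_setE oA; apply/carrier_openE; exact: cf.
by have := proj1 (@continuousP (@carrier X T hT) _ f) cf _ oD; move/carrier_openE.
Qed.

Lemma urysohn_function X T (hT : is_topology T) (hn : Defs.normal_space T)
  (A B : X -> Prop) : is_closed T A -> is_closed T B ->
  (forall x, A x -> B x -> False) ->
  exists f : X -> Rdefinitions.R, continuous_on T f /\
    (forall x, A x -> f x = 0%R) /\ (forall x, B x -> f x = 1%R).
Proof.
move=> cA cB AB.
have nT : normal_space (@carrier X T hT).
  apply/(@urysohn.normal_openP (Rdefinitions.R : realType)).
  move=> A' B' /carrier_closedE cA' /carrier_closedE cB' AB'.
  have [|U [V [TU [TV [AU [BV UV]]]]]] := hn A' B' cA' cB'.
    by move=> x a b; have : (A' `&` B') x by []; rewrite AB'.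
  exists U, V; split => //; try exact/carrier_openE.
  by apply/seteqP; split => [x [ux vx]|//]; case: (UV x ux vx).
have [|f [cf _ fA fB]] := proj1 (@urysohn.uniform_separatorP _ (Rdefinitions.R : realType)
  (A : set (@carrier X T hT)) B).
  apply: (proj1 (@urysohn.normal_separatorP (Rdefinitions.R : realType) _) nT);
    try exact/carrier_closedE.
  by apply/seteqP; split => [x [ax bx]|//]; case: (AB x ax bx).
exists f; split; first exact/(continuous_onE hT).
by split => x hx; [apply: (fA (f x)) | apply: (fB (f x))]; exists x.
Qed.

Local Open Scope R_scope.

Section ContinuousAndBaire.
Variables (X : Type) (T : (X -> Prop) -> Prop).
Hypothesis hT : is_topology T.

Lemma continuous_const (c : R) : continuous_on T (fun _ : X => c).
Proof.
have [hTrue [hFalse _]] := hT.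
move=> D _; case: (classic (D c)) => Dc.
  by apply: (open_ext hTrue).
by apply: (open_ext hFalse).
Qed.

Lemma continuous_plus (f g : X -> R) :
  continuous_on T f -> continuous_on T g -> continuous_on T (fun x => f x + g x).
Proof.
move=> /(continuous_onE hT) cf /(continuous_onE hT) cg; apply/(continuous_onE hT).
by move=> x; exact: (@continuousD _ R^o (@carrier X T hT) f g x (cf x) (cg x)).
Qed.

Lemma continuous_mult (f g : X -> R) :
  continuous_on T f -> continuous_on T g -> continuous_on T (fun x => f x * g x).
Proof.
move=> /(continuous_onE hT) cf /(continuous_onE hT) cg; apply/(continuous_onE hT).
by move=> x; exact: (@continuousM _ (@carrier X T hT) f g x (cf x) (cg x)).
Qed.

Lemma continuous_baire_one (f : X -> R) : continuous_on T f -> baire_one T f.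
Proof.
move=> cf; exists (fun _ => f); split => // x eps heps.
by exists 0%N => n _; rewrite /R_dist Rminus_diag Rabs_R0.
Qed.

Lemma baire_one_const (c : R) : baire_one T (fun _ => c).
Proof. exact/continuous_baire_one/continuous_const. Qed.

Lemma baire_one_plus (f g : X -> R) :
  baire_one T f -> baire_one T g -> baire_one T (fun x => f x + g x).
Proof.
move=> [fn [cfn lfn]] [gn [cgn lgn]]; exists (fun n x => fn n x + gn n x).
by split => [n|x]; [apply: continuous_plus | apply: CV_plus].
Qed.

Lemma baire_one_mult (f g : X -> R) :
  baire_one T f -> baire_one T g -> baire_one T (fun x => f x * g x).
Proof.
move=> [fn [cfn lfn]] [gn [cgn lgn]]; exists (fun n x => fn n x * gn n x).
by split => [n|x]; [apply: continuous_mult | apply: CV_mult].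
Qed.

End ContinuousAndBaire.
Arguments baire_one_const {X T} hT c.

Section T1Spaces.
Variables (X : Type) (T : (X -> Prop) -> Prop).
Hypotheses (hT : is_topology T) (hT1 : T1_space T).

Lemma point_closed (x : X) : is_closed T (fun z => z = x).
Proof.
apply: (open_ext (open_union hT (I := {U | T U /\ ~ U x}) (U := @proj1_sig _ _) _)).
  by case=> U [].
move=> z; split => [[[U [_ nUx]] /= Uz] zx|zx].
  by apply: nUx; rewrite -zx.
by have [U [TU [Uz nUx]]] := hT1 z x zx; exists (exist _ U (conj TU nUx)).
Qed.

Lemma avoid_finitely_many (x : X) (l : list X) :
  exists V, T V /\ V x /\ forall y, In y l -> y <> x -> ~ V y.
Proof.
elim: l => [|a l [V [TV [Vx hV]]]].
  by exists (fun _ => True); split; [case: hT | split].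
case: (classic (a = x)) => [ax|ax].
  by exists V; do 2!split => //; move=> y [<-|ly] //; exact: hV.
have [U [TU [Ux nUa]]] := hT1 x a (fun e => ax (esym e)).
exists (fun z => V z /\ U z); split; first exact: open_inter.
by split => // y [<-|ly] yx [Vy Uy] //; exact: hV ly yx Vy.
Qed.

Lemma finite_T1_discrete (A : X -> Prop) : finite_type X -> T A.
Proof.
move=> [l hl].
have point_open (x : X) : T (fun y => y = x).
  have [V [TV [Vx hV]]] := avoid_finitely_many x l.
  apply: (open_ext TV) => y; split => [Vy|->] //.
  by apply: NNPP => yx; exact: hV y (hl y) yx Vy.
apply: (open_ext (open_union hT (I := {x | A x}) (U := fun x y => y = proj1_sig x) _)).
  by case=> x Ax; exact: point_open.
by move=> y; split => [[[x Ax] /= ->] //|Ay]; exists (exist _ y Ay).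
Qed.

Lemma finite_T1_baire_one (f : X -> R) : finite_type X -> baire_one T f.
Proof.
by move=> hfin; apply: continuous_baire_one => D _; exact: finite_T1_discrete.
Qed.

End T1Spaces.
Arguments point_closed {X T} hT hT1 x.
Arguments finite_T1_baire_one {X T} hT hT1 f.

Section Ideals.
Variables (X : Type) (T : (X -> Prop) -> Prop).

Lemma proper_ideal_not_one {J : (X -> R) -> Prop} :
  is_proper_ideal T J -> ~ J (fun _ => 1).
Proof.
move=> [[_ [_ [_ Jmul]]] [f [bf nJf]]] J1; apply: nJf.
have := Jmul _ f J1 bf.
by have -> : (fun x => f x * 1) = f by apply/funext => x; rewrite Rmult_1_r.
Qed.

(* The union of a nonempty chain of proper ideals is a proper ideal: it is
   closed under sums because any two members are comparable, and it omits 1. *)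
Lemma chain_union_proper (C : ((X -> R) -> Prop) -> Prop) :
  baire_one T (fun _ => 1) -> (exists J, C J) ->
  (forall J, C J -> is_proper_ideal T J) ->
  (forall J K, C J -> C K -> (forall f, J f -> K f) \/ (forall f, K f -> J f)) ->
  is_proper_ideal T (fun f => exists J, C J /\ J f).
Proof.
move=> b1 [J0 CJ0] Cproper Cchain; split; last first.
  by exists (fun _ => 1); split => // -[J [CJ J1]]; exact: proper_ideal_not_one (Cproper J CJ) J1.
have ideal J : C J -> is_ideal T J by move=> /Cproper [].
split; first by move=> f [J [/ideal [bJ _] Jf]]; exact: bJ.
split; first by exists J0; split => //; have [_ []] := ideal J0 CJ0.
split=> [f g [J [CJ Jf]] [K [CK Kg]]|f g [J [CJ Jf]] bg].
  have [_ [_ [Jadd _]]] := ideal J CJ; have [_ [_ [Kadd _]]] := ideal K CK.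
  case: (Cchain J K CJ CK) => [JK|KJ].
    by exists K; split => //; apply: Kadd => //; exact: JK.
  by exists J; split => //; apply: Jadd => //; exact: KJ.
by exists J; split => //; have [_ [_ [_ Jmul]]] := ideal J CJ; exact: Jmul.
Qed.

(* Krull's theorem: by Zorn's lemma every proper ideal of B_1(X) lies in a
   maximal one, chains being bounded by their unions. *)
Lemma maximal_ideal_extension (I : (X -> R) -> Prop) :
  baire_one T (fun _ => 1) -> is_proper_ideal T I ->
  exists M, is_maximal_ideal T M /\ (forall f, I f -> M f).
Proof.
move=> b1 pI.
pose Ext := {J : (X -> R) -> Prop | is_proper_ideal T J /\ (forall f, I f -> J f)}.
pose sub (J K : Ext) := `[< forall f, proj1_sig J f -> proj1_sig K f >].
pose I' : Ext := exist _ I (conj pI (fun f h => h)).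
have [| | |M Mmax] := @ZL_preorder Ext I' sub.
- by move=> J; apply/asboolP.
- by move=> J K L /asboolP JK /asboolP KL; apply/asboolP => f /JK /KL.
- move=> C Cchain.
  have [[J0 CJ0]|Cempty] := pselect (exists J, C J); last first.
    by exists I' => J CJ; case: Cempty; exists J.
  pose C' J := exists E : Ext, C E /\ proj1_sig E = J.
  have pU : is_proper_ideal T (fun f => exists J, C' J /\ J f).
    apply: chain_union_proper => //; first by exists (proj1_sig J0), J0.
      by move=> _ [[J [pJ IJ]] [CJ <-]].
    move=> _ _ [E [CE <-]] [F [CF <-]].
    by case: (Cchain E F CE CF) => /asboolP; [left|right].
  have IU f : I f -> exists J, C' J /\ J f.
    by move=> If; exists (proj1_sig J0); split; [exists J0 | exact: (proj2 (proj2_sig J0))].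
  exists (exist _ (fun f => exists J, C' J /\ J f) (conj pU IU) : Ext) => E CE.
  apply/asboolP => f Ef.
  by exists (proj1_sig E); split => //; exists E.
- exists (proj1_sig M); split; last exact: (proj2 (proj2_sig M)).
  split => [|J pJ MJ]; first exact: (proj1 (proj2_sig M)).
  have IJ f : I f -> J f by move=> If; apply/MJ/(proj2 (proj2_sig M)).
  by have /asboolP := Mmax (exist _ J (conj pJ IJ)) (asboolT MJ).
Qed.

End Ideals.
Arguments maximal_ideal_extension {X T I}.

Section FreeIdeals.
Variables (X : Type) (T : (X -> Prop) -> Prop).
Variable I : (X -> R) -> Prop.
Hypotheses (hI : is_ideal T I) (hfree : ~ fixed_ideal I).
Hypothesis all_baire : forall f : X -> R, baire_one T f.

(* A free ideal contains, for each finite set of points, a nonnegative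
   function positive on all of them: a sum of squares f_x^2 with f_x(x) <> 0. *)
Lemma free_ideal_positive_on (l : list X) :
  exists g, I g /\ (forall z, 0 <= g z) /\ (forall y, In y l -> 0 < g y).
Proof.
have [_ [I0 [Iadd Imul]]] := hI.
have witness (x : X) : exists f, I f /\ f x <> 0.
  apply: NNPP => nowit; apply: hfree; exists x => f If.
  by apply: NNPP => fx; apply: nowit; exists f.
elim: l => [|a l [g [Ig [g_ge0 g_gt0]]]].
  by exists (fun _ => 0); do 2!split => //; move=> z; lra.
have [f [If fa]] := witness a.
exists (fun x => g x + f x * f x); split; first exact/Iadd/Imul.
split=> [z|y [<-|ly]]; first by have := g_ge0 z; nra.
- by have := g_ge0 a; have := Rsqr_pos_lt _ fa; rewrite /Rsqr; lra.
- by have := g_ge0 y; have := g_gt0 y ly; nra.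
Qed.

(* On a finite set, such a function is a unit of R^X, so I contains 1. *)
Lemma free_ideal_finite_improper : finite_type X -> forall h, I h.
Proof.
move=> [l hl] h; have [_ [_ [_ Imul]]] := hI.
have [g [Ig [_ g_gt0]]] := free_ideal_positive_on l.
have -> : h = (fun x => (h x / g x) * g x).
  by apply/funext => x; have := g_gt0 x (hl x) => gx; field; lra.
exact: Imul.
Qed.

End FreeIdeals.
Arguments free_ideal_finite_improper {X T I}.

Definition indicator {X : Type} (A : X -> Prop) (z : X) : R :=
  if pselect (A z) then 1 else 0.

Section PerfectlyNormal.
Variables (X : Type) (T : (X -> Prop) -> Prop).
Hypothesis hT : is_topology T.

(* A G_delta set is the intersection of a decreasing sequence of open sets:
   replace U_n by U_0 /\ ... /\ U_n. *)
Lemma G_delta_decreasing (A : X -> Prop) : G_delta T A ->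
  exists V : nat -> X -> Prop, (forall n, T (V n)) /\ (forall n z, A z -> V n z) /\
    (forall z, ~ A z -> exists m, forall n, (m <= n)%N -> ~ V n z).
Proof.
move=> [U [TU hU]]; exists (fun n z => forall k, (k <= n)%N -> U k z).
split; last split.
- elim=> [|n IHn].
    apply: (open_ext (TU 0%N)) => z; split => [U0 k|/(_ 0%N (leqnn 0))] //.
    by rewrite leqn0 => /eqP ->.
  apply: (open_ext (open_inter hT IHn (TU n.+1))) => z; split.
    by move=> [Uk Un] k; rewrite leq_eqVlt ltnS => /orP [/eqP ->|/Uk].
  by move=> Uk; split => [k kn|]; apply: Uk; [exact: leqW | exact: leqnn].
- by move=> n z /hU Az k _.
- move=> z nAz; have [m nUm] : exists m, ~ U m z.
    by apply: NNPP => allU; apply/nAz/hU => m; apply: NNPP => nUm; apply: allU; exists m.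
  by exists m => n mn Vn; exact: nUm (Vn m mn).
Qed.

(* In a normal space the indicator of a closed G_delta set A is Baire one:
   Urysohn functions g_n equal to 1 on A and 0 off V_n converge to it. *)
Lemma indicator_closed_G_delta_baire_one (A : X -> Prop) :
  Defs.normal_space T -> is_closed T A -> G_delta T A -> baire_one T (indicator A).
Proof.
move=> hn cA /G_delta_decreasing [V [TV [AV Vlim]]].
have urysohn_n (n : nat) : exists g : X -> R, continuous_on T g /\
    (forall z, ~ V n z -> g z = 0) /\ (forall z, A z -> g z = 1).
  apply: urysohn_function => //; last by move=> z nVz /(AV n).
  by apply: (open_ext (TV n)) => z; split => [Vz|/NNPP].
have [g hg] := choice urysohn_n; exists g; split => [n|z]; first exact: (proj1 (hg n)).
move=> eps eps_gt0; rewrite /indicator; case: pselect => [Az|nAz].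
  by exists 0%N => n _; rewrite /R_dist (proj2 (proj2 (hg n)) z Az) Rminus_diag Rabs_R0.
have [m hm] := Vlim z nAz; exists m => n /leP mn.
by rewrite /R_dist (proj1 (proj2 (hg n)) z (hm n mn)) Rminus_diag Rabs_R0.
Qed.

End PerfectlyNormal.
Arguments indicator_closed_G_delta_baire_one {X T} hT {A}.

Definition finitely_supported {X : Type} (T : (X -> Prop) -> Prop) (f : X -> R) : Prop :=
  baire_one T f /\ exists l : list X, forall x, f x <> 0 -> In x l.

(* On an infinite space they form a proper ideal (1 has infinite support). *)
Lemma finitely_supported_proper {X : Type} {T : (X -> Prop) -> Prop} :
  is_topology T -> ~ finite_type X -> is_proper_ideal T (finitely_supported T).
Proof.
move=> hT hinf; split; last first.
  exists (fun _ => 1); split; first exact: baire_one_const.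
  by move=> [_ [l hl]]; apply: hinf; exists l => x; apply: hl; lra.
split; first by move=> f [].
split; first by split; [exact: baire_one_const | exists nil].
split=> [f g [bf [lf hf]] [bg [lg hg]]|f g [bf [lf hf]] bg].
  split; first exact: baire_one_plus.
  exists (lf ++ lg) => x fgx; apply: in_or_app.
  case: (classic (f x = 0)) => [fx|/hf]; last by left.
  by right; apply: hg => gx; apply: fgx; rewrite fx gx; ring.
split; first exact: baire_one_mult.
by exists lf => x gfx; apply: hf => fx; apply: gfx; rewrite fx; ring.
Qed.

(* Direction (2) => (1): on an infinite perfectly normal T1 space, a maximal
   ideal containing the finitely supported functions is free, since it contains
   the indicator of each point. *)
Lemma infinite_free_maximal_ideal {X : Type} {T : (X -> Prop) -> Prop} :
  is_topology T -> T1_space T -> perfectly_normal T -> ~ finite_type X ->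
  exists M, is_maximal_ideal T M /\ ~ fixed_ideal M.
Proof.
move=> hT hT1 [hn hGd] hinf.
have [M [hM suppM]] := maximal_ideal_extension (baire_one_const hT 1)
  (finitely_supported_proper hT hinf).
exists M; split => // -[p hp].
have cp := point_closed hT hT1 p.
have : finitely_supported T (indicator (fun z => z = p)).
  split; first exact: (indicator_closed_G_delta_baire_one hT hn cp (hGd _ cp)).
  exists [:: p] => x; rewrite /indicator; case: pselect => [xp _|_ /(_ erefl)] //.
  by left; rewrite xp.
by move=> /suppM /hp; rewrite /indicator; case: pselect => [pp /= |/(_ erefl)] //; lra.
Qed.

Theorem theorem3p9 (X : Type) (T : (X -> Prop) -> Prop)
  (hT : is_topology T) (hT1 : T1_space T) (hpn : perfectly_normal T) :
  (finite_type X <-> (forall I, is_maximal_ideal T I -> fixed_ideal I)) /\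
  ((forall I, is_maximal_ideal T I -> fixed_ideal I) <->
   (forall I, is_proper_ideal T I -> fixed_ideal I)).
Proof.
have proper_fixed : finite_type X -> forall I, is_proper_ideal T I -> fixed_ideal I.
  move=> hfin I [hI [h [_ nIh]]]; apply: NNPP => hfree; apply: nIh.
  exact: free_ideal_finite_improper hI hfree (finite_T1_baire_one hT hT1 ^~ hfin) hfin h.
have finite_of_maximal_fixed :
    (forall I, is_maximal_ideal T I -> fixed_ideal I) -> finite_type X.
  move=> hmax; apply: NNPP => hinf.
  have [M [hM hfree]] := infinite_free_maximal_ideal hT hT1 hpn hinf.
  exact/hfree/hmax.
split; split.
- by move=> hfin I [pI _]; exact: proper_fixed.
- exact: finite_of_maximal_fixed.
- by move=> hmax I; exact: proper_fixed (finite_of_maximal_fixed hmax) I.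
- by move=> hprop I [pI _]; exact: hprop.
Qed.
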